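(* Let $\mathcal{H}=\mathbb{C}^{d_1}$ with $d_1$ odd and $\mathcal{K}=\mathbb{C}^{d_2}$. Then every minimizer $U$ of $$\min\Big\{\frac1{d_1d_2}\operatorname{tr}\big[U\,\overline U^{T_2}\big]:\ U\in\mathcal{B}(\mathcal{H}\otimes\mathcal{K})\text{ unitary}\Big\}$$ has the property that $U\,\overline U^{T_2}$ is Hermitian.
   Context: The partial transpose $T_2$ is taken with respect to a fixed product basis, defined by linear extension of $(X\otimes Y)^{T_2}=X\otimes Y^T$; $\overline U$ is the entrywise complex conjugate, and $\overline U^{T_2}=(\overline U)^{T_2}$. *)

From HB Require Import structures.
From mathcomp Require Import all_boot all_order all_algebra.
From mathcomp Require Import reals.
From mathcomp Require Export complex mxtens sesquilinear spectral.
Set Implicit Arguments. Unset Strict Implicit. Unset Printing Implicit Defensive.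
Import Order.TTheory GRing.Theory Num.Theory Num.Def.
Local Open Scope ring_scope.

(* Operators on H (x) K with H = C^d1, K = C^d2 are matrices of size d1*d2,
   the product basis being indexed through mathcomp's [mxtens_index]
   (the convention of [tensmx], the Kronecker product). *)

Definition mxconj {C : numClosedFieldType} {m n : nat} (A : 'M[C]_(m, n)) :=
  map_mx conjC A.

(* partial transpose on the second factor:
   ((a,b),(c,d)) entry of A^{T_2} is the ((a,d),(c,b)) entry of A,
   i.e. the linear extension of (X *t Y)^{T_2} = X *t Y^T. *)
Definition ptrans2 {T : Type} {d1 d2 : nat} (A : 'M[T]_(d1 * d2)) : 'M[T]_(d1 * d2) :=
  \matrix_(i, j)
    A (mxtens_index ((mxtens_unindex i).1, (mxtens_unindex j).2))
      (mxtens_index ((mxtens_unindex j).1, (mxtens_unindex i).2)).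

Lemma ptrans2_tensmx (R : pzRingType) d1 d2 (X : 'M[R]_d1) (Y : 'M[R]_d2) :
  ptrans2 (X *t Y) = X *t Y^T.
Proof. by apply/matrixP => i j; rewrite !mxE !mxtens_indexK /=. Qed.

Definition objective {C : numClosedFieldType} (d1 d2 : nat) (U : 'M[C]_(d1 * d2)) : C :=
  ((d1 * d2)%:R)^-1 * \tr (U *m ptrans2 (mxconj U)).
Arguments objective {C} d1 d2 U.

From HB Require Import structures.
From mathcomp Require Import all_boot all_order all_algebra.
From mathcomp Require Import reals complex mxtens sesquilinear spectral.
From mathcomp Require Import ring lra.
Import Order.TTheory GRing.Theory Num.Theory Num.Def.
Set Implicit Arguments. Unset Strict Implicit. Unset Printing Implicit Defensive.
Local Open Scope ring_scope.
Local Open Scope sesquilinear_scope.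

(* The objective is B(U, U)/(d1 d2) for the sesquilinear form
   B(X, Y) = tr[X \overline Y^{T_2}], which is Hermitian because the partial
   transpose is self-adjoint for the trace pairing.  For a unit vector u, the
   orthogonal projection P = u^* u and |1 + m| = 1, the matrix (1 + m P) U is
   again unitary, and B((1 + mP)U, (1 + mP)U) - B(U, U) = 2 Re(m a) + |m|^2 c
   with c real and a = B(PU, U) = u (U \overline U^{T_2}) u^*.  Minimality
   forces this to be nonnegative on the whole circle; since |m|^2 = -2 Re m
   there, we get Re(m (a - c)) >= 0, and letting m -> 0 along the circle in
   both directions shows that a - c, hence a, is real.  A matrix whose
   quadratic form is real on all unit vectors is Hermitian. *)

Lemma mxtrace_mul_ptrans2 (R : pzSemiRingType) (d1 d2 : nat) (A B : 'M[R]_(d1 * d2)) :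
  \tr (A *m ptrans2 B) = \tr (ptrans2 A *m B).
Proof.
pose swap2 (p : 'I_(d1 * d2) * 'I_(d1 * d2)) :=
  (mxtens_index ((mxtens_unindex p.1).1, (mxtens_unindex p.2).2),
   mxtens_index ((mxtens_unindex p.2).1, (mxtens_unindex p.1).2)).
have swap2K : involutive swap2.
  by case=> i j; rewrite /swap2 !mxtens_indexK /= !mxtens_unindexK.
rewrite /mxtrace; under [LHS]eq_bigr => i _ do rewrite mxE.
under [RHS]eq_bigr => i _ do rewrite mxE.
rewrite !pair_bigA (reindex_inj (can_inj swap2K)); apply: eq_bigr => -[i j] _.
case: (mxtens_indexP i) => a b; case: (mxtens_indexP j) => c d.
by rewrite /swap2 !mxE; cbn -[mxtens_index mxtens_unindex]; rewrite !mxtens_indexK.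
Qed.

Lemma map_ptrans2 (aT rT : Type) (f : aT -> rT) (d1 d2 : nat) (A : 'M[aT]_(d1 * d2)) :
  map_mx f (ptrans2 A) = ptrans2 (map_mx f A).
Proof. by apply/matrixP => i j; rewrite !mxE. Qed.

Section PartialTransposeForm.
Variables (C : numClosedFieldType) (d1 d2 : nat).
Implicit Types (X Y : 'M[C]_(d1 * d2)) (m : C).

Definition pt_form X Y := \tr (X *m ptrans2 (mxconj Y)).

Lemma objectiveE X : objective d1 d2 X = (d1 * d2)%:R^-1 * pt_form X X.
Proof. by []. Qed.

Lemma pt_formC X Y : pt_form Y X = (pt_form X Y)^*.
Proof.
have mxconjK : map_mx conjC (mxconj Y) = Y by apply/matrixP => i j; rewrite !mxE conjCK.
rewrite /pt_form -trace_map_mx map_mxM map_ptrans2 mxconjK.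
by rewrite mxtrace_mul_ptrans2 mxtrace_mulC.
Qed.

Lemma pt_form_perturb X Y m :
  pt_form (X + m *: Y) (X + m *: Y) =
  pt_form X X + (m * pt_form Y X + (m * pt_form Y X)^*) + m * m^* * pt_form Y Y.
Proof.
have ptconjDZ : ptrans2 (mxconj (X + m *: Y)) = ptrans2 (mxconj X) + m^* *: ptrans2 (mxconj Y).
  by apply/matrixP => i j; rewrite !mxE rmorphD rmorphM.
rewrite /pt_form ptconjDZ mulmxDl !mulmxDr -!scalemxAl -!scalemxAr !linearD !linearZ /=.
by rewrite rmorphM /= -(pt_formC Y X) /pt_form; ring.
Qed.

End PartialTransposeForm.

Section Projections.
Variables (C : numClosedFieldType) (n : nat).
Implicit Types (P : 'M[C]_n) (m : C).

Lemma unitarymx_projection_phase P m :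
  P ^t* = P -> P *m P = P -> (1 + m) * (1 + m)^* = 1 ->
  1%:M + m *: P \is unitarymx.
Proof.
move=> selfadj idem circ; apply/unitarymxP.
have -> : (1%:M + m *: P) ^t* = 1%:M + m^* *: P.
  by rewrite linearD /= map_mxD linearZ /= map_mxZ trmx1 map_mx1 selfadj.
rewrite mulmxDl !mulmxDr !mulmx1 mul1mx -scalemxAl -scalemxAr idem scalerA.
have circ0 : m^* + (m + m * m^*) = 0.
  by rewrite -(subrr 1) -{1}circ rmorphD rmorph1; ring.
by rewrite -addrA -!scalerDl circ0 scale0r addr0.
Qed.

Lemma rank_one_projection (u : 'rV[C]_n) :
  u \is unitarymx -> (u ^t* *m u) ^t* = u ^t* *m u /\ (u ^t* *m u) *m (u ^t* *m u) = u ^t* *m u.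
Proof.
move=> /unitarymxP uu; split.
  by rewrite trmx_mul map_mxM trmxCK.
by rewrite mulmxA -[u ^t* *m u *m _]mulmxA uu mulmx1.
Qed.

End Projections.

Section RealQuadraticForm.
Variables (C : numClosedFieldType) (n : nat).
Implicit Types (A D : 'M[C]_n) (u : 'rV[C]_n).
Local Notation form A := (form_of_matrix (@conjC C) A).

Lemma form_adjoint A u : form (A ^t*) u u = (form A u u)^*.
Proof.
have adjM p q r (X : 'M[C]_(p, q)) (Y : 'M[C]_(q, r)) : (X *m Y) ^t* = Y ^t* *m X ^t*.
  by rewrite trmx_mul map_mxM.
rewrite /form_of_matrix -trace_map_mx -[in RHS]mxtrace_tr map_trmx.
by rewrite !adjM trmxCK mulmxA.
Qed.

Lemma form_scale A c u : form A (c *: u) (c *: u) = c * c^* * form A u u.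
Proof. by rewrite linearZl_LR linearZ /= mulrA [c * _]mulrC. Qed.

Lemma form_real_from_unit A :
  (forall u, u \is unitarymx -> form A u u \is Num.real) ->
  forall u, form A u u \is Num.real.
Proof.
move=> realA u; have [->|u_neq0] := eqVneq u 0; first by rewrite linear0l rpred0.
have r_gt0 := dotmx_is_dotmx u_neq0; set r := dotmx u u in r_gt0.
have r_neq0 : r != 0 by rewrite gt_eqF.
pose c := sqrtC r^-1.
have cc : c * c^* = r^-1.
  by rewrite (CrealP (ger0_real _)) ?sqrtC_ge0 ?invr_ge0 ?ltW // -expr2 sqrtCK.
have cu_unitary : c *: u \is unitarymx.
  apply/unitarymxP; rewrite linearZ /= map_mxZ -scalemxAl -scalemxAr scalerA cc.
  by rewrite [u *m _]mx11_scalar -dotmxE scale_scalar_mx mulVf.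
have := realA _ cu_unitary; rewrite form_scale cc => /(rpredM (gtr0_real r_gt0)).
by rewrite mulrA mulfV // mul1r.
Qed.

Lemma form_diag_eq0 D : (forall u, form D u u = 0) -> D = 0.
Proof.
move=> D0; apply/matrixP => i j; rewrite mxE.
have expand c (u := 'e_i + c *: 'e_j : 'rV_n) : form D u u = c^* * D i j + c * D j i.
  have := D0 'e_i; have := D0 'e_j; rewrite !rV_formee => Djj Dii.
  by rewrite linearDl !linearDr /= !linearZl_LR !linearZ /= !rV_formee Dii Djj; ring.
have := D0 ('e_i + 1 *: 'e_j); have := D0 ('e_i + 'i *: 'e_j).
rewrite !expand conjC1 conjCi !mul1r => h_i h_1.
have : 2%:R * 'i * D i j = 0.
  have -> : 2%:R * 'i * D i j = 'i * (D i j + D j i) - (- 'i * D i j + 'i * D j i) by ring.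
  by rewrite h_1 h_i mulr0 subrr.
by move/eqP; rewrite !mulf_eq0 pnatr_eq0 (negbTE (neq0Ci C)) /= => /eqP.
Qed.

Lemma hermsymmx_real_form A :
  (forall u, u \is unitarymx -> form A u u \is Num.real) -> A \is hermsymmx.
Proof.
move=> realA; apply/is_hermitianmxP; rewrite expr0 scale1r.
apply/eqP; rewrite -subr_eq0; apply/eqP/form_diag_eq0 => u.
have -> : form (A - A ^t*) u u = form A u u - form (A ^t*) u u.
  by rewrite /form_of_matrix mulmxBr mulmxBl linearB.
by rewrite form_adjoint (CrealP (form_real_from_unit realA u)) subrr.
Qed.

End RealQuadraticForm.

Lemma quadratic_nonpos_lincoef_eq0 (R : realFieldType) (a b : R) :
  (forall t, a * t ^+ 2 + b * t <= 0) -> b = 0.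
Proof.
move=> le0; apply/eqP; rewrite -sqrf_eq0 eq_le sqr_ge0 andbT.
have [a_ge0 | a_lt0] := lerP 0 a; first by have := le0 b; nra.
have := le0 (- b / (2 * a)).
have -> : a * (- b / (2 * a)) ^+ 2 + b * (- b / (2 * a)) = - (b ^+ 2 / (4 * a)).
  by field; rewrite lt_eqF.
by rewrite oppr_le0 nmulr_lge0 // invr_lt0; lra.
Qed.

Section CircleMin.
Variable R : rcfType.

(* [simpc] only computes with the concrete conjugation [conjc] of [R[i]]. *)
Lemma conjCE (x : R[i]) : x^* = (x^*)%C.
Proof. by []. Qed.

Lemma circle_Re_ge0_real (z : R[i]) :
  (forall m : R[i], (1 + m) * (1 + m)^* = 1 -> 0 <= m * z + (m * z)^*) ->
  z \is Num.real.
Proof.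
case: z => x y ge0; apply/CrealP; rewrite conjCE /=.
suff -> : y = 0 by rewrite oppr0.
apply: (@quadratic_nonpos_lincoef_eq0 _ x) => t.
have t2_gt0 : 0 < 1 + t ^+ 2 by rewrite ltr_pwDl // sqr_ge0.
have t2_neq0 : 1 + t ^+ 2 != 0 by rewrite gt_eqF.
(* 1 + m = (1 + i t)^2 / (1 + t^2) runs over the unit circle. *)
pose m := Complex (- (2 * t ^+ 2) / (1 + t ^+ 2)) (2 * t / (1 + t ^+ 2)).
have m_circ : (1 + m) * (1 + m)^* = 1.
  by rewrite conjCE /m; simpc; congr (Complex _ _); field.
have m_Re : m * Complex x y + (m * Complex x y)^* =
            ((x * t ^+ 2 + y * t) * - (4 / (1 + t ^+ 2)))%:C%C.
  by rewrite conjCE /m; simpc; congr (Complex _ _); field.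
by have := ge0 m m_circ; rewrite m_Re lecR nmulr_lge0 // oppr_lt0 divr_gt0.
Qed.

Lemma circle_perturb_real (a c : R[i]) : c \is Num.real ->
  (forall m : R[i], (1 + m) * (1 + m)^* = 1 ->
     0 <= (m * a + (m * a)^*) + m * m^* * c) ->
  a \is Num.real.
Proof.
move=> c_real ge0; rewrite -(subrK c a) rpredD //.
apply: circle_Re_ge0_real => m circ; have := ge0 m circ.
have mm : m * m^* = - (m + m^*).
  apply/eqP; rewrite -subr_eq0 opprK; apply/eqP.
  by rewrite -(subrr 1) -{1}circ rmorphD rmorph1; ring.
suff -> : m * (a - c) + (m * (a - c))^* = m * a + (m * a)^* + - (m + m^*) * c by rewrite mm.
by rewrite !rmorphM rmorphB /= (CrealP c_real); ring.
Qed.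

End CircleMin.

Theorem proposition9 (R : realType) (d1 d2 : nat) (hd1 : odd d1) (hd2 : (0 < d2)%N)
  (U : 'M[R[i]]_(d1 * d2)) :
  U \is unitarymx ->
  (forall V : 'M[R[i]]_(d1 * d2), V \is unitarymx -> objective d1 d2 U <= objective d1 d2 V) ->
  U *m ptrans2 (mxconj U) \is hermsymmx.
Proof.
move=> U_unitary U_min; apply: hermsymmx_real_form => u u_unitary.
have [P_adj P_idem] := rank_one_projection u_unitary.
set P := u ^t* *m u in P_adj P_idem.
have -> : form_of_matrix conjC (U *m ptrans2 (mxconj U)) u u = pt_form (P *m U) U.
  by rewrite /pt_form /form_of_matrix mxtrace_mulC !mulmxA.
apply: (@circle_perturb_real _ _ (pt_form (P *m U) (P *m U))).
  by apply/CrealP; rewrite -pt_formC.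
move=> m circ.
have V_unitary := mul_unitarymx (unitarymx_projection_phase P_adj P_idem circ) U_unitary.
have n_gt0 : 0 < (d1 * d2)%:R :> R[i] by rewrite ltr0n muln_gt0 odd_gt0.
have := U_min _ V_unitary; rewrite !objectiveE ler_pM2l ?invr_gt0 //.
by rewrite mulmxDl mul1mx -scalemxAl pt_form_perturb -addrA lerDl.
Qed.
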